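(* Let $m\ge2$, $n\ge1$, $f_i:\mathbb{R}^n\to\mathbb{R}$ ($i=1,\dots,m$) smooth, $\mathbf{r}\in\mathbb{R}^n$, and $\mathcal{G}$ an undirected graph on $\{1,\dots,m\}$ with Laplacian $\mathbf{L}$. Assume each $f_i$ has $L^g_{f_i}$-Lipschitz gradient and $L^H_{f_i}$-Lipschitz Hessian, each $f_i$ is coercive, and $\mathcal{G}$ is connected. Let $L_F^g=\max_iL^g_{f_i}$. Let $\boldsymbol\theta^0\in\mathbb{R}^{mn}$ satisfy $(\mathbf{1}_m^\top\otimes\mathbf{I}_n)\boldsymbol\theta^0=\mathbf{r}$. Then for any fixed step-size $0<\alpha\le\frac{1}{\|\sqrt{\mathbf{L}}\|^2L_F^g}$, the sequence generated by $\boldsymbol\theta^{k+1}=\boldsymbol\theta^k-\alpha\hat{\mathbf{L}}\nabla F(\boldsymbol\theta^k)$ satisfies $(\mathbf{1}_m^\top\otimes\mathbf{I}_n)\boldsymbol\theta^k=\mathbf{r}$ for all $k\ge0$ and $$\lim_{k\to\infty}\|\sqrt{\hat{\mathbf{L}}}\,\nabla F(\boldsymbol\theta^k)\|=0.$$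
   Context: $\boldsymbol\theta=[\boldsymbol\theta_1^\top,\dots,\boldsymbol\theta_m^\top]^\top\in\mathbb{R}^{mn}$, $F(\boldsymbol\theta)=\sum_i f_i(\boldsymbol\theta_i)$, $\nabla F$ the stacked gradient. $\sqrt{\mathbf{L}}$ is the unique symmetric positive semidefinite square root of $\mathbf{L}$; $\hat{\mathbf{L}}=\mathbf{L}\otimes\mathbf{I}_n$, $\sqrt{\hat{\mathbf{L}}}=\sqrt{\mathbf{L}}\otimes\mathbf{I}_n$; $\|\cdot\|$ on matrices is the spectral norm. *)

From HB Require Import structures.
From mathcomp Require Import all_boot all_order all_algebra.
From mathcomp Require Import all_classical all_reals all_analysis.
Set Implicit Arguments. Unset Strict Implicit. Unset Printing Implicit Defensive.
Import Order.TTheory GRing.Theory Num.Theory.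
Import numFieldNormedType.Exports.
Local Open Scope ring_scope.
Local Open Scope classical_set_scope.

Section Defs.
Variable R : realType.

(* Euclidean norm of a row vector (the library norm on 'rV is the sup norm). *)
Definition enorm (n : nat) (v : 'rV[R]_n) : R :=
  Num.sqrt (\sum_(j < n) v 0 j ^+ 2).

(* Frobenius norm of an m x n matrix = Euclidean norm of the stacked vector in R^{mn}. *)
Definition fnorm (m n : nat) (A : 'M[R]_(m, n)) : R :=
  Num.sqrt (\sum_(i < m) \sum_(j < n) A i j ^+ 2).

Definition specnorm (n : nat) (A : 'M[R]_n) : R :=
  sup [set enorm (v *m A) | v in [set v : 'rV[R]_n | enorm v <= 1]].

Definition evec (n : nat) (j : 'I_n) : 'rV[R]_n := delta_mx 0 j.

Definition iterD (n : nat) (vs : seq 'rV[R]_n) (f : 'rV[R]_n -> R) : 'rV[R]_n -> R :=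
  foldr (fun v g => 'D_v g) f vs.

Definition smooth (n : nat) (f : 'rV[R]_n -> R) : Prop :=
  forall (vs : seq 'rV[R]_n) (x : 'rV[R]_n), differentiable (iterD vs f) x.

Definition grad (n : nat) (f : 'rV[R]_n -> R) (x : 'rV[R]_n) : 'rV[R]_n :=
  \row_j ('D_(evec j) f) x.

Definition hessian (n : nat) (f : 'rV[R]_n -> R) (x : 'rV[R]_n) : 'M[R]_n :=
  \matrix_(i, j) ('D_(evec j) ('D_(evec i) f)) x.

Definition grad_lipschitz (n : nat) (f : 'rV[R]_n -> R) (Lg : R) : Prop :=
  forall x y, enorm (grad f x - grad f y) <= Lg * enorm (x - y).

Definition hessian_lipschitz (n : nat) (f : 'rV[R]_n -> R) (LH : R) : Prop :=
  forall x y, specnorm (hessian f x - hessian f y) <= LH * enorm (x - y).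

Definition coercive (n : nat) (f : 'rV[R]_n -> R) : Prop :=
  forall M : R, exists r : R, forall x, r <= enorm x -> M <= f x.

Definition undirected_graph (m : nat) (e : rel 'I_m) : Prop :=
  symmetric e /\ irreflexive e.

Definition connected_graph (m : nat) (e : rel 'I_m) : Prop :=
  forall i j, connect e i j.

Definition laplacian (m : nat) (e : rel 'I_m) : 'M[R]_m :=
  \matrix_(i, j) (if i == j then (#|[set k | e i k]|)%:R else - (e i j)%:R).

Definition stacked_grad (m n : nat) (f : 'I_m -> 'rV[R]_n -> R)
  (Th : 'M[R]_(m, n)) : 'M[R]_(m, n) :=
  \matrix_(i, j) grad (f i) (row i Th) 0 j.

(* (1_m^T (x) I_n) theta = sum of the blocks theta_i. *)
Definition block_sum (m n : nat) (Th : 'M[R]_(m, n)) : 'rV[R]_n :=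
  const_mx 1 *m Th.

End Defs.

From HB Require Import structures.
From mathcomp Require Import all_boot all_order all_algebra.
From mathcomp Require Import all_classical all_reals all_analysis.
From mathcomp Require Import ring lra.
Set Implicit Arguments. Unset Strict Implicit. Unset Printing Implicit Defensive.
Import Order.TTheory GRing.Theory Num.Theory.
Import numFieldNormedType.Exports.
Local Open Scope ring_scope.
Local Open Scope classical_set_scope.

(* Let F(Th) = \sum_i f_i(Th_i), G = \nabla F(Th) and L = max_i L^g_{f_i}.  The
   descent lemma for L-Lipschitz gradients gives, since S is symmetric with
   S^2 the Laplacian,
     F(Th - alpha S^2 G) <= F(Th) - alpha |S G|^2 + alpha^2 L / 2 |S (S G)|^2
                         <= F(Th) - alpha / 2 |S G|^2
   as soon as alpha |S|^2 L <= 1.  Coercivity makes F bounded below, so the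
   decreases |S G_k|^2 are summable and tend to 0.  The block sum is invariant
   because the columns of the Laplacian sum to 0. *)

Section FrobeniusGeometry.
Variable R : realType.
Implicit Types (m n : nat).

Definition fdot m n (A B : 'M[R]_(m, n)) : R := \sum_i \sum_j A i j * B i j.

Lemma sqr_fnorm m n (A : 'M[R]_(m, n)) : fnorm A ^+ 2 = fdot A A.
Proof.
rewrite sqr_sqrtr; last by do 2![apply: sumr_ge0 => ? _]; exact: sqr_ge0.
by apply: eq_bigr => i _; apply: eq_bigr => j _; rewrite expr2.
Qed.

Lemma fnorm_ge0 m n (A : 'M[R]_(m, n)) : 0 <= fnorm A.
Proof. exact: sqrtr_ge0. Qed.

Lemma fnorm0 m n : fnorm (0 : 'M[R]_(m, n)) = 0.
Proof.
by rewrite /fnorm big1 ?sqrtr0 // => i _; rewrite big1 // => j _; rewrite mxE expr0n.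
Qed.

Lemma enorm_fnorm n (v : 'rV[R]_n) : enorm v = fnorm v.
Proof.
by rewrite /fnorm big_ord1; congr Num.sqrt; apply: eq_bigr => j _; rewrite ord1.
Qed.

Lemma fdot_rows m n (A B : 'M[R]_(m, n)) :
  fdot A B = \sum_i fdot (row i A) (row i B).
Proof.
by apply: eq_bigr => i _; rewrite /fdot big_ord1; apply: eq_bigr => j _; rewrite !mxE.
Qed.

Lemma sqr_fnorm_rows m n (A : 'M[R]_(m, n)) :
  fnorm A ^+ 2 = \sum_i fnorm (row i A) ^+ 2.
Proof. by rewrite sqr_fnorm fdot_rows; apply: eq_bigr => i _; rewrite sqr_fnorm. Qed.

Lemma fdot_trace m n (A B : 'M[R]_(m, n)) : fdot A B = \tr (A *m B^T).
Proof. by apply: eq_bigr => i _; rewrite mxE; apply: eq_bigr => j _; rewrite mxE. Qed.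

Lemma fdot_mulmxr m n (A B : 'M[R]_(m, n)) (S : 'M[R]_m) :
  fdot A (S *m B) = fdot (S^T *m A) B.
Proof. by rewrite !fdot_trace trmx_mul mulmxA mxtrace_mulC mulmxA. Qed.

Lemma fdotZr m n (A B : 'M[R]_(m, n)) c : fdot A (c *: B) = c * fdot A B.
Proof.
rewrite /fdot mulr_sumr; apply: eq_bigr => i _; rewrite mulr_sumr.
by apply: eq_bigr => j _; rewrite mxE mulrCA.
Qed.

Lemma fdotBl m n (A B C : 'M[R]_(m, n)) : fdot (A - B) C = fdot A C - fdot B C.
Proof.
rewrite /fdot -sumrB; apply: eq_bigr => i _; rewrite -sumrB.
by apply: eq_bigr => j _; rewrite !mxE mulrBl.
Qed.

Lemma fdotC m n (A B : 'M[R]_(m, n)) : fdot A B = fdot B A.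
Proof. by apply: eq_bigr => i _; apply: eq_bigr => j _; rewrite mulrC. Qed.

Lemma fdotZl m n (A B : 'M[R]_(m, n)) c : fdot (c *: A) B = c * fdot A B.
Proof. by rewrite fdotC fdotZr fdotC. Qed.

Lemma fnormZ m n (A : 'M[R]_(m, n)) c : fnorm (c *: A) = `|c| * fnorm A.
Proof.
apply/eqP; rewrite -(@eqrXn2 _ 2) ?mulr_ge0 ?fnorm_ge0 //.
by rewrite exprMn real_normK ?num_real // !sqr_fnorm fdotZl fdotZr mulrA -expr2.
Qed.

Lemma fdot_self_eq0 m n (A : 'M[R]_(m, n)) : fdot A A = 0 -> A = 0.
Proof.
move=> A0; apply/matrixP => i j; rewrite mxE.
apply/eqP; rewrite -sqrf_eq0 expr2; apply/eqP.
have rowi0 : \sum_j A i j * A i j = 0.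
  by apply: (psumr_eq0P _ A0) => // k _; apply: sumr_ge0 => l _; rewrite -expr2 sqr_ge0.
by apply: (psumr_eq0P _ rowi0) => // k _; rewrite -expr2 sqr_ge0.
Qed.

Lemma fdot_expand m n (A B : 'M[R]_(m, n)) a b :
  fdot (a *: A - b *: B) (a *: A - b *: B) =
  a ^+ 2 * fdot A A - 2 * a * b * fdot A B + b ^+ 2 * fdot B B.
Proof.
rewrite /fdot !mulr_sumr -sumrB -big_split /=; apply: eq_bigr => i _.
rewrite !mulr_sumr -sumrB -big_split /=; apply: eq_bigr => j _.
by rewrite !mxE; ring.
Qed.

Lemma ler_fdot_fnorm m n (A B : 'M[R]_(m, n)) : `|fdot A B| <= fnorm A * fnorm B.
Proof.
have [B0|] := eqVneq (fdot B B) 0.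
  rewrite (fdot_self_eq0 B0) /fdot big1 ?normr0 ?mulr_ge0 ?fnorm_ge0 // => i _.
  by rewrite big1 // => j _; rewrite mxE mulr0.
rewrite -(@ler_pXn2r _ 2) ?nnegrE ?mulr_ge0 ?fnorm_ge0 //.
rewrite real_normK ?num_real // exprMn !sqr_fnorm.
set a := fdot A A; set b := fdot A B; set c := fdot B B => c_neq0.
have c_gt0 : 0 < c by rewrite lt_def c_neq0 /c -sqr_fnorm sqr_ge0.
have : 0 <= c * (a * c - b ^+ 2).
  have -> : c * (a * c - b ^+ 2) = fdot (c *: A - b *: B) (c *: A - b *: B).
    by rewrite fdot_expand -/a -/b -/c; ring.
  by rewrite -sqr_fnorm sqr_ge0.
by rewrite pmulr_rge0 // subr_ge0 mulrC.
Qed.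

Lemma fnorm_tr m n (A : 'M[R]_(m, n)) : fnorm A^T = fnorm A.
Proof.
rewrite /fnorm exchange_big /=.
by congr Num.sqrt; apply: eq_bigr => i _; apply: eq_bigr => j _; rewrite mxE.
Qed.

Lemma fdot_rowE n (u v : 'rV[R]_n) : fdot u v = \sum_j u 0 j * v 0 j.
Proof. by rewrite /fdot big_ord1. Qed.

Lemma fnorm_mulmx_le m n p (A : 'M[R]_(m, n)) (B : 'M[R]_(n, p)) :
  fnorm (A *m B) <= fnorm A * fnorm B.
Proof.
rewrite -(@ler_pXn2r _ 2) ?nnegrE ?mulr_ge0 ?fnorm_ge0 // exprMn.
rewrite -(fnorm_tr B) !sqr_fnorm_rows mulr_suml; apply: ler_sum => i _.
rewrite [in leLHS]sqr_fnorm fdot_rowE mulr_sumr; apply: ler_sum => j _.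
have -> : row i (A *m B) 0 j = fdot (row i A) (row j B^T).
  by rewrite fdot_rowE !mxE; apply: eq_bigr => k _; rewrite !mxE.
rewrite -expr2 -exprMn -real_normK ?num_real //.
by rewrite ler_pXn2r ?nnegrE ?mulr_ge0 ?fnorm_ge0 // ler_fdot_fnorm.
Qed.

Lemma fnorm_unit_mulmx_le_specnorm n (S : 'M[R]_n) (v : 'rV[R]_n) :
  fnorm v <= 1 -> fnorm (v *m S) <= specnorm S.
Proof.
have bounded : has_sup [set enorm (w *m S) | w in [set w : 'rV[R]_n | enorm w <= 1]].
  split; first by exists (enorm (0 *m S)), 0; rewrite //= enorm_fnorm fnorm0 ler01.
  exists (fnorm S) => _ [w /= w_le1 <-]; rewrite !enorm_fnorm in w_le1 *.
  by apply: le_trans (fnorm_mulmx_le _ _) _; rewrite ler_piMl ?fnorm_ge0.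
by rewrite -!enorm_fnorm => v_le1; apply: sup_upper_bound => //; exists v.
Qed.

Lemma specnorm_ge0 n (S : 'M[R]_n) : 0 <= specnorm S.
Proof.
apply: le_trans (fnorm_unit_mulmx_le_specnorm S (v := 0) _).
  by rewrite mul0mx fnorm0.
by rewrite fnorm0 ler01.
Qed.

Lemma fnorm_row_mulmx_le n (v : 'rV[R]_n) (S : 'M[R]_n) :
  fnorm (v *m S) <= specnorm S * fnorm v.
Proof.
have [v0|v_neq0] := eqVneq (fnorm v) 0.
  have -> : v = 0 by apply: fdot_self_eq0; rewrite -sqr_fnorm v0 expr0n.
  by rewrite mul0mx fnorm0 mulr0.
have v_gt0 : 0 < fnorm v by rewrite lt_def v_neq0 fnorm_ge0.
have := @fnorm_unit_mulmx_le_specnorm _ S ((fnorm v)^-1 *: v).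
rewrite -scalemxAl !fnormZ ger0_norm ?invr_ge0 ?fnorm_ge0 // mulVf // lexx mulrC.
by rewrite ler_pdivrMr //; apply.
Qed.

Lemma fnorm_mulmx_le_specnorm m n (X : 'M[R]_(m, n)) (S : 'M[R]_n) :
  fnorm (X *m S) <= specnorm S * fnorm X.
Proof.
rewrite -(@ler_pXn2r _ 2) ?nnegrE ?mulr_ge0 ?fnorm_ge0 ?specnorm_ge0 //.
rewrite exprMn !sqr_fnorm_rows mulr_sumr; apply: ler_sum => i _.
rewrite row_mul -exprMn ler_pXn2r ?nnegrE ?mulr_ge0 ?fnorm_ge0 ?specnorm_ge0 //.
exact: fnorm_row_mulmx_le.
Qed.

Lemma fnorm_lmulmx_le_specnorm m n (S : 'M[R]_m) (X : 'M[R]_(m, n)) :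
  fnorm (S *m X) <= specnorm S^T * fnorm X.
Proof. by rewrite -fnorm_tr trmx_mul -(fnorm_tr X) fnorm_mulmx_le_specnorm. Qed.

End FrobeniusGeometry.

Section Descent.
Variable R : realType.

Lemma le_div2_of_is_derive_le (phi dphi : R -> R) (c : R) :
  phi 0 = 0 -> (forall t : R, is_derive t 1 phi (dphi t)) ->
  (forall t : R, 0 < t < 1 -> dphi t <= c * t) -> phi 1 <= c / 2.
Proof.
move=> phi0 phi_dphi dphi_le.
pose g := phi - (c / 2) \*: (@id R ^+ 2).
have g_dg (t : R) : is_derive t 1 g (dphi t - c * t).
  have sqr_d := is_deriveZ (c / 2) (is_deriveX 2 (is_derive_id t 1)).
  apply: is_derive_eq (is_deriveB (phi_dphi t) sqr_d) _.
  by rewrite /GRing.scale /= mulr1 expr1 mulrA divfK ?pnatr_eq0.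
have g_cont : {within `[0, 1], continuous g}.
  apply: continuous_subspaceT => t; apply: differentiable_continuous.
  by apply/derivable1_diffP; exact: (@ex_derive _ _ _ _ _ _ _ (g_dg t)).
have [t t01 mvt] := MVT ltr01 (fun t _ => g_dg t) g_cont.
have {mvt} : phi 1 - c / 2 * 1 ^+ 2 - (phi 0 - c / 2 * 0 ^+ 2) = (dphi t - c * t) * (1 - 0).
  exact: mvt.
rewrite phi0 expr1n expr0n /= mulr0 !subr0 !mulr1 => /eqP; rewrite subr_eq => /eqP ->.
by rewrite gerDr subr_le0 dphi_le //; move: t01; rewrite in_itv.
Qed.

Lemma norm_le_div2_of_is_derive (phi dphi : R -> R) (c : R) :
  phi 0 = 0 -> (forall t : R, is_derive t 1 phi (dphi t)) ->
  (forall t : R, 0 < t < 1 -> `|dphi t| <= c * t) -> `|phi 1| <= c / 2.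
Proof.
move=> phi0 phi_dphi dphi_le; rewrite ler_norml -lerNl; apply/andP; split.
  have Nphi_d (t : R) : is_derive t 1 (- phi) (- dphi t) by exact: is_deriveN.
  apply: (le_div2_of_is_derive_le _ Nphi_d).
  - by rewrite fctE phi0 oppr0.
  - by move=> t t01; rewrite (le_trans _ (dphi_le t t01)) // -normrN ler_norm.
apply: le_div2_of_is_derive_le phi0 phi_dphi _ => t t01.
exact: le_trans (ler_norm _) (dphi_le t t01).
Qed.

Lemma is_derive_along n (f : 'rV[R]_n -> R) (x d : 'rV[R]_n) (t : R) :
  derivable f (x + t *: d) d ->
  is_derive t 1 (fun s : R => f (x + s *: d)) ('D_d f (x + t *: d)).
Proof.
have shiftE : (fun h : R => h^-1 *: (((fun s : R => f (x + s *: d)) \o shift t) (h *: 1)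
                 - f (x + t *: d))) =
              (fun h : R => h^-1 *: ((f \o shift (x + t *: d)) (h *: d) - f (x + t *: d))).
  apply/funext => h /=; congr (_ *: (f _ - _)).
  by rewrite scalerDl addrCA [h%:A]mulr1.
by move=> f_d; split; rewrite /derivable /derive shiftE.
Qed.

Lemma derive_grad n (f : 'rV[R]_n -> R) (p d : 'rV[R]_n) :
  differentiable f p -> 'D_d f p = fdot (grad f p) d.
Proof.
move=> f_diff; rewrite deriveE // [in LHS](row_sum_delta d) linear_sum fdot_rowE.
apply: eq_bigr => j _; rewrite linearZ /= mxE -deriveE //.
by rewrite /GRing.scale /= mulrC.
Qed.

Lemma descent_lemma n (f : 'rV[R]_n -> R) (L : R) (x d : 'rV[R]_n) :
  (forall p, differentiable f p) -> grad_lipschitz f L ->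
  `|f (x + d) - f x - fdot (grad f x) d| <= L / 2 * fnorm d ^+ 2.
Proof.
move=> f_diff f_lip.
pose phi := (fun s : R => f (x + s *: d)) - cst (f x) - fdot (grad f x) d \*: (@id R).
have phi_d (s : R) : is_derive s 1 phi (fdot (grad f (x + s *: d) - grad f x) d).
  have along := is_derive_along (@diff_derivable _ _ _ f _ d (f_diff (x + s *: d))).
  have lin := is_deriveZ (fdot (grad f x) d) (is_derive_id s 1).
  apply: is_derive_eq (is_deriveB (is_deriveB along (is_derive_cst (f x) s 1)) lin) _.
  by rewrite subr0 derive_grad // fdotBl /GRing.scale /= mulr1.
have phi0 : phi 0 = 0.
  by rewrite /phi !fctE scale0r addr0 subrr /= scaler0 subr0.
have phi1 : phi 1 = f (x + d) - f x - fdot (grad f x) d.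
  by rewrite /phi !fctE scale1r /= [_%:A]mulr1.
have dphi_le (t : R) : 0 < t < 1 ->
    `|fdot (grad f (x + t *: d) - grad f x) d| <= L * fnorm d ^+ 2 * t.
  move=> /andP[t_gt0 _]; apply: le_trans (ler_fdot_fnorm _ _) _.
  have := f_lip (x + t *: d) x.
  rewrite !enorm_fnorm addrAC subrr add0r fnormZ (ger0_norm (ltW t_gt0)) => lip.
  have -> : L * fnorm d ^+ 2 * t = L * (t * fnorm d) * fnorm d by ring.
  by rewrite ler_wpM2r ?fnorm_ge0.
by rewrite -phi1 mulrAC; exact: norm_le_div2_of_is_derive phi0 phi_d dphi_le.
Qed.

Lemma coercive_bounded_below n (f : 'rV[R]_n -> R) (L : R) :
  (forall p, differentiable f p) -> grad_lipschitz f L -> coercive f ->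
  exists B, forall x, B <= f x.
Proof.
move=> f_diff f_lip /(_ 0) [r f_ge0].
exists (Num.min 0 (f 0 - fnorm (grad f 0) * `|r| - `|L| / 2 * r ^+ 2)) => y.
have [r_le|y_lt] := leP r (enorm y); first by rewrite ge_min f_ge0.
rewrite ge_min; apply/orP; right; rewrite enorm_fnorm in y_lt.
have := descent_lemma 0 y f_diff f_lip; rewrite add0r ler_norml => /andP[lower _].
have := ler_fdot_fnorm (grad f 0) y; rewrite ler_norml => /andP[cs _].
have y_le : fnorm y <= `|r| := le_trans (ltW y_lt) (ler_norm r).
have lin_le : fnorm (grad f 0) * fnorm y <= fnorm (grad f 0) * `|r|.
  by rewrite ler_wpM2l ?fnorm_ge0.
have quad_le : L / 2 * fnorm y ^+ 2 <= `|L| / 2 * r ^+ 2.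
  apply: (@le_trans _ _ (`|L| / 2 * fnorm y ^+ 2)).
    by rewrite ler_wpM2r ?sqr_ge0 // ler_wpM2r ?invr_ge0 ?ler0n ?ler_norm.
  rewrite ler_wpM2l ?mulr_ge0 ?invr_ge0 ?ler0n ?normr_ge0 //.
  by rewrite -[r ^+ 2]real_normK ?num_real // ler_pXn2r ?nnegrE ?fnorm_ge0 ?normr_ge0.
lra.
Qed.
End Descent.

Section StackedObjective.
Variables (R : realType) (m n : nat) (f : 'I_m -> 'rV[R]_n -> R) (Lg : 'I_m -> R) (L : R).
Hypothesis f_diff : forall i p, differentiable (f i) p.
Hypothesis f_lip : forall i, grad_lipschitz (f i) (Lg i).
Hypothesis Lg_le : forall i, Lg i <= L.

Definition stacked_obj (Th : 'M[R]_(m, n)) : R := \sum_i f i (row i Th).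

Lemma row_stacked_grad Th i : row i (stacked_grad f Th) = grad (f i) (row i Th).
Proof. by apply/rowP => j; rewrite !mxE. Qed.

Lemma stacked_descent Th D :
  stacked_obj (Th + D) <=
  stacked_obj Th + fdot (stacked_grad f Th) D + L / 2 * fnorm D ^+ 2.
Proof.
rewrite /stacked_obj fdot_rows sqr_fnorm_rows mulr_sumr -!big_split /=.
apply: ler_sum => i _; rewrite linearD /= row_stacked_grad.
have := descent_lemma (row i Th) (row i D) (f_diff i) (f_lip i).
rewrite ler_norml => /andP[_ upper].
have : Lg i / 2 * fnorm (row i D) ^+ 2 <= L / 2 * fnorm (row i D) ^+ 2.
  by rewrite ler_wpM2r ?sqr_ge0 // ler_wpM2r ?invr_ge0 ?ler0n ?Lg_le.
lra.
Qed.

Lemma stacked_obj_bounded_below :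
  (forall i, coercive (f i)) -> exists B, forall Th, B <= stacked_obj Th.
Proof.
move=> f_coer.
have /choice [B f_ge] : forall i, exists B, forall x, B <= f i x.
  by move=> i; exact: coercive_bounded_below (f_diff i) (f_lip i) (f_coer i).
by exists (\sum_i B i) => Th; apply: ler_sum => i _; exact: f_ge.
Qed.

Variables (S : 'M[R]_m) (alpha : R).
Hypotheses (S_sym : S^T = S) (L_ge0 : 0 <= L) (alpha_gt0 : 0 < alpha).
Hypothesis alpha_le : alpha * (specnorm S ^+ 2 * L) <= 1.

Lemma gradient_step_decrease Th :
  stacked_obj (Th - alpha *: (S *m S *m stacked_grad f Th)) <=
  stacked_obj Th - alpha / 2 * fnorm (S *m stacked_grad f Th) ^+ 2.
Proof.
set G := stacked_grad f Th; set s := specnorm S; set a := fnorm (S *m G) ^+ 2.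
have inner : fdot G ((- alpha) *: (S *m S *m G)) = - alpha * a.
  by rewrite fdotZr -mulmxA fdot_mulmxr S_sym /a sqr_fnorm.
have quad : fnorm ((- alpha) *: (S *m S *m G)) ^+ 2 <= alpha ^+ 2 * (s ^+ 2 * a).
  rewrite fnormZ normrN (ger0_norm (ltW alpha_gt0)) exprMn ler_wpM2l ?sqr_ge0 //.
  rewrite /a -exprMn ler_pXn2r ?nnegrE ?mulr_ge0 ?specnorm_ge0 ?fnorm_ge0 //.
  by rewrite -mulmxA; apply: le_trans (fnorm_lmulmx_le_specnorm _ _) _; rewrite S_sym.
rewrite -scaleNr; apply: le_trans (stacked_descent _ _) _; rewrite inner.
have a_ge0 : 0 <= a by rewrite sqr_ge0.
have : L / 2 * fnorm ((- alpha) *: (S *m S *m G)) ^+ 2 <= alpha / 2 * a.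
  apply: le_trans (ler_wpM2l _ quad) _; first by rewrite mulr_ge0 ?invr_ge0.
  have -> : L / 2 * (alpha ^+ 2 * (s ^+ 2 * a)) = alpha * (s ^+ 2 * L) * (alpha / 2 * a).
    by ring.
  by rewrite ler_piMl // mulr_ge0 // divr_ge0 // ltW.
lra.
Qed.

End StackedObjective.

Section Laplacian.
Variables (R : realType) (m : nat) (e : rel 'I_m).
Hypothesis e_undir : undirected_graph e.

Lemma block_sum_laplacian : block_sum (laplacian R e) = 0.
Proof.
case: e_undir => e_sym e_irr; apply/rowP => j; rewrite !mxE.
under eq_bigr do rewrite !mxE mul1r.
rewrite (bigD1 j) //= eqxx (eq_bigr (fun i => - (e j i)%:R)); last first.
  by move=> i /negbTE ->; rewrite e_sym.
rewrite sumrN; apply/eqP; rewrite subr_eq0; apply/eqP.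
rewrite -sum1_card big_mkcond natr_sum [RHS]big_mkcond; apply: eq_bigr => i _.
rewrite (_ : i \in _ = e j i); last by apply/idP/idP; rewrite in_setE.
by case: eqP => [->|_]; rewrite ?e_irr //; case: (e j i).
Qed.

Lemma block_sum_laplacian_step n (Th G : 'M[R]_(m, n)) (alpha : R) :
  block_sum (Th - alpha *: (laplacian R e *m G)) = block_sum Th.
Proof.
rewrite /block_sum mulmxBr -scalemxAr mulmxA.
rewrite -[const_mx 1 *m laplacian R e]/(block_sum _) block_sum_laplacian.
by rewrite mul0mx scaler0 subr0.
Qed.
End Laplacian.

Section SufficientDecrease.
Variable R : realType.

Lemma cvg0_of_sufficient_decrease (u a : R^nat) (c B : R) :
  0 < c -> (forall k, 0 <= a k) -> (forall k, B <= u k) ->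
  (forall k, u k.+1 <= u k - c * a k) -> a @ \oo --> 0.
Proof.
move=> c_gt0 a_ge0 u_ge u_decr.
have partial_le k : c * series a k <= u 0%N - u k.
  elim: k => [|k IH]; first by rewrite /series /= big_geq // mulr0 subrr.
  by rewrite seriesSr mulrDr; have := u_decr k; lra.
apply: cvg_series_cvg_0; apply: nondecreasing_is_cvgn.
  by apply/nondecreasing_seqP => k; rewrite seriesSr lerDl.
exists ((u 0%N - B) / c) => _ [k _ <-].
rewrite ler_pdivlMr // mulrC; apply: le_trans (partial_le k) _.
by rewrite lerD2l lerN2.
Qed.
End SufficientDecrease.

Theorem proposition2 (R : realType) (m n : nat) (hm : (2 <= m)%N) (hn : (1 <= n)%N)
  (f : 'I_m -> 'rV[R]_n -> R) (r : 'rV[R]_n) (e : rel 'I_m)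
  (Lg LH : 'I_m -> R)
  (S : 'M[R]_m) (* the square root of the Laplacian *)
  (Th0 : 'M[R]_(m, n)) (alpha : R) (theta : nat -> 'M[R]_(m, n)) :
  undirected_graph e ->
  (forall i, smooth (f i)) ->
  (forall i, grad_lipschitz (f i) (Lg i)) ->
  (forall i, hessian_lipschitz (f i) (LH i)) ->
  (forall i, coercive (f i)) ->
  connected_graph e ->
  S^T = S -> (forall v : 'rV[R]_m, 0 <= (v *m S *m v^T) 0 0) ->
  S *m S = laplacian R e ->
  block_sum Th0 = r ->
  0 < alpha ->
  alpha <= 1 / (specnorm S ^+ 2 * \big[Num.max/0]_(i < m) Lg i) ->
  theta 0%N = Th0 ->
  (forall k, theta k.+1 = theta k - alpha *: (laplacian R e *m stacked_grad f (theta k))) ->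
  (forall k, block_sum (theta k) = r) /\
  (fun k => fnorm (S *m stacked_grad f (theta k))) @ \oo --> 0.
Proof.
move=> e_undir f_smooth f_lip _ f_coer _ S_sym _ S_sqr Th0_sum alpha_gt0 alpha_le.
move=> theta0 theta_succ.
have f_diff i p : differentiable (f i) p := f_smooth i [::] p.
set L := \big[Num.max/0]_(i < m) Lg i in alpha_le.
have L_ge0 : 0 <= L by exact: bigmax_ge_id.
have Lg_le i : Lg i <= L by exact: le_bigmax.
have alpha_small : alpha * (specnorm S ^+ 2 * L) <= 1.
  have [->|P_neq0] := eqVneq (specnorm S ^+ 2 * L) 0; first by rewrite mulr0 ler01.
  by rewrite -ler_pdivlMr // lt_def P_neq0 mulr_ge0 ?sqr_ge0.
split=> [k|].
  by elim: k => [|k IH]; rewrite ?theta0 // theta_succ block_sum_laplacian_step.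
pose a k := fnorm (S *m stacked_grad f (theta k)) ^+ 2.
have [B obj_ge] := stacked_obj_bounded_below f_diff f_lip f_coer.
have a_cvg0 : a @ \oo --> 0.
  apply: (@cvg0_of_sufficient_decrease _ (stacked_obj f \o theta) a (alpha / 2) B) => //.
  - by rewrite divr_gt0.
  - by move=> k; exact: sqr_ge0.
  - by move=> k; exact: obj_ge.
  - by move=> k /=; rewrite theta_succ -S_sqr; exact: gradient_step_decrease.
have -> : (fun k => fnorm (S *m stacked_grad f (theta k))) = Num.sqrt \o a.
  by apply/funext => k /=; rewrite sqrtr_sqr ger0_norm ?fnorm_ge0.
by rewrite -sqrtr0; exact: continuous_cvg (@sqrt_continuous R 0) a_cvg0.
Qed.
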